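(* Let $(\mathcal{C},V^-,\iota)$ be a pre-Clifford modular tensor category with quantum dimension of $V^-$ equal to $1$. Let $R^0$ be the set of labels fixed by the involution $i\mapsto\overline{i}$ (all of which are R), let $NS^+$ be a set of representatives of the orbits of this involution on NS labels, and $R^+$ a set of representatives of the free orbits on R labels. Define the matrices $A=(s_{ij})_{i,j\in NS^+}$, $B=(s_{ij})_{i\in NS^+,j\in R^+}$, $C=(s_{ij})_{i,j\in R^+}$, $D=(s_{ij})_{i\in NS^+,j\in R^0}$. Then $A$ and $C$ are symmetric and nonsingular, $|R^+|+|R^0|=|NS^+|$, the square matrix $(B\ \ D)$ is nonsingular, and $B^TD=0$.
   Context: A modular tensor category $\mathcal{C}$ is a semisimple ribbon category over $\mathbb{C}$ with finitely many isomorphism classes of simple objects, braiding $\sigma$, twist $\theta$ with $\theta_{X\boxtimes Y}=\sigma_{Y,X}\sigma_{X,Y}(\theta_X\boxtimes\theta_Y)$, whose $s$-matrix $s_{ij}=\theta_i^{-1}\theta_j^{-1}\sum_kN_{ij}^k\theta_kd_k$ (indexed by labels = isomorphism classes of simple objects; $\theta_i$ twist scalar, $d_k$ quantum dimension, $N_{ij}^k$ fusion multiplicities) is symmetric, nonsingular, and has square a scalar multiple of the charge conjugation matrix (the permutation matrix of $i\mapsto$ dual label). A pre-Clifford modular tensor category is such $\mathcal{C}$ with an object $V^-$ and an isomorphism $\iota:V^-\boxtimes V^-\cong1$ such that $\theta_{V^-}=-\mathrm{Id}$. The involution $\overline{i}$ sends the class of $X$ to the class of $V^-\boxtimes X$.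 A simple $X$ is NS if $\sigma_{V^-,X}\sigma_{X,V^-}=1$ and R if it equals $-1$. *)

From HB Require Import structures.
From mathcomp Require Import all_boot all_order all_algebra all_field.
Set Implicit Arguments. Unset Strict Implicit. Unset Printing Implicit Defensive.
Import Order.TTheory GRing.Theory Num.Theory.
Local Open Scope ring_scope.

Definition smat_of (n : nat) (N : 'I_n -> 'I_n -> 'I_n -> nat)
  (theta qdim : 'I_n -> algC) : 'M[algC]_n :=
  \matrix_(i, j) ((theta i)^-1 * (theta j)^-1 *
                  \sum_(k < n) (N i j k)%:R * theta k * qdim k).

Definition chargemx (n : nat) (dual : 'I_n -> 'I_n) : 'M[algC]_n :=
  \matrix_(i, j) (j == dual i)%:R.

(* The label-level data of a pre-Clifford modular tensor category
   (C, V^-, iota): labels are 'I_n (isomorphism classes of simples),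
   N = fusion multiplicities, theta = twist scalars, qdim = quantum dims,
   dual = duality on labels, one = unit label, vminus = class of V^-,
   bar i = class of V^- (x) X_i, mono i = scalar of the monodromy
   sigma_{V^-,X_i} sigma_{X_i,V^-}.  The fields below are the facts about
   these data that hold in every such category. *)
Record preClifford (n : nat) := PreClifford {
  N : 'I_n -> 'I_n -> 'I_n -> nat;
  theta : 'I_n -> algC;
  qdim : 'I_n -> algC;
  dual : 'I_n -> 'I_n;
  one : 'I_n;
  vminus : 'I_n;
  bar : 'I_n -> 'I_n;
  mono : 'I_n -> algC;
  N_unit : forall i k, N one i k = (k == i) :> nat;
  N_assoc : forall a b c k,
    (\sum_(m < n) N a b m * N m c k = \sum_(m < n) N b c m * N a m k)%N;
  theta_neq0 : forall i, theta i != 0;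
  dual_invol : forall i, dual (dual i) = i;
  s_sym : (smat_of N theta qdim)^T = smat_of N theta qdim;
  s_unit : smat_of N theta qdim \in unitmx;
  s_sq : exists c : algC,
    smat_of N theta qdim *m smat_of N theta qdim = c *: chargemx dual;
  (* V^- : iota : V^- (x) V^- ~= 1, theta_{V^-} = -Id *)
  iota_fusion : forall k, N vminus vminus k = (k == one) :> nat;
  theta_vminus : theta vminus = -1;
  bar_fusion : forall i k, N vminus i k = (k == bar i) :> nat;
  dual_bar : forall i, dual (bar i) = bar (dual i);
  qdim_bar : forall i, qdim (bar i) = qdim vminus * qdim i;
  (* monodromy with the invertible order-2 object V^- is +-1 on simples *)
  mono_sq : forall i, mono i ^+ 2 = 1;
  (* monodromy with V^- is multiplicative along fusion (hexagon) *)
  mono_fusion : forall i j k, (N i j k != 0)%N -> mono k = mono i * mono j;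
  (* balancing: theta_{V^- (x) X} = sigma sigma (theta_{V^-} (x) theta_X) *)
  theta_bar : forall i, theta (bar i) = mono i * theta vminus * theta i
}.

Definition smat n (C : preClifford n) : 'M[algC]_n :=
  smat_of (N C) (theta C) (qdim C).

Definition isNS n (C : preClifford n) (i : 'I_n) : bool := mono C i == 1.
Definition isR n (C : preClifford n) (i : 'I_n) : bool := mono C i == -1.

Definition R0set n (C : preClifford n) : {set 'I_n} := [set i | bar C i == i].

Definition NSreps n (C : preClifford n) (X : {set 'I_n}) : Prop :=
  (forall i, i \in X -> isNS C i) /\
  (forall i, isNS C i -> #|X :&: [set i; bar C i]| = 1%N).

Definition Rreps n (C : preClifford n) (X : {set 'I_n}) : Prop :=
  (forall i, i \in X -> isR C i && (bar C i != i)) /\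
  (forall i, isR C i -> bar C i != i -> #|X :&: [set i; bar C i]| = 1%N).

Definition subS n (C : preClifford n) (X Y : {set 'I_n}) : 'M[algC]_(#|X|, #|Y|) :=
  \matrix_(a, b) smat C (enum_val a) (enum_val b).

From Pilot Require Import Defs.
From HB Require Import structures.
From mathcomp Require Import all_boot all_order all_algebra all_field.
From mathcomp Require Import ring.
Set Implicit Arguments. Unset Strict Implicit. Unset Printing Implicit Defensive.
Import Order.TTheory GRing.Theory Num.Theory.
Local Open Scope ring_scope.

(* Since d(V^-) = 1, fusing with V^- gives s_{bar i, j} = e_j s_{ij}, where
   e_j = +1 on NS and -1 on R labels.  Splitting S^2 = c (charge conjugation)
   with the indicators (1 +- e_k)/2 gives, for labels i, j of the same type,
     sum_{k NS} s_ik s_kj = c/2 ([j = i*] + [bar j = i*]),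
     sum_{k R}  s_ik s_kj = c/2 ([j = i*] - [bar j = i*]),
   and the summands are invariant under k |-> bar k, so sums over orbit
   representatives are halves of these (s_ik = 0 for i in R and bar k = k).
   Hence A^2, C^2, B^T B, D^T D and 2 B B^T + D D^T have exactly one nonzero
   entry in each row and column, so they are invertible, and B^T D = 0.  The
   matrix (B D) then has a right inverse and an invertible Gram matrix
   (block-triangular), so it is square and invertible. *)

Lemma monomial_unitmx (F : fieldType) m (G : 'M[F]_m) :
  (forall a, exists b, G a b != 0) ->
  (forall a b b', G a b != 0 -> G a b' != 0 -> b = b') ->
  (forall a a' b, G a b != 0 -> G a' b != 0 -> a = a') -> G \in unitmx.
Proof.
move=> G_row G_row_uniq G_col_uniq.
have [h Gh] : exists h : 'I_m -> 'I_m, forall a, G a (h a) != 0.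
  by exists (fun a => xchoose (G_row a)) => a; exact: (xchooseP (G_row a)).
pose H := \matrix_(b, a) (if b == h a then (G a b)^-1 else 0).
suff /mulmx1_unit[] : G *m H = 1%:M by [].
apply/matrixP => a a'; rewrite !mxE (bigD1 (h a')) //= big1 => [|b /negbTE hb].
  rewrite mxE eqxx addr0; have [<-|a_a'] := eqVneq a a'; first by rewrite mulfV.
  have /eqP-> : G a (h a') == 0.
    by apply: contraNT a_a' => Gaha'; apply/eqP/(G_col_uniq _ _ _ Gaha' (Gh a')).
  by rewrite mul0r.
by rewrite mxE hb mulr0.
Qed.

Lemma castmx_unitmx (F : fieldType) m p (M : 'M[F]_(m, p)) (L K : 'M[F]_(p, m)) :
  M *m L \in unitmx -> K *m M \in unitmx ->
  exists e : p = m, castmx (erefl m, e) M \in unitmx.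
Proof.
move=> ML KM; have e : p = m.
  apply/eqP; rewrite eqn_leq; apply/andP; split.
    by rewrite -{1}(mxrank_unit KM) (leq_trans (mxrankM_maxr K M) (rank_leq_row M)).
  by rewrite -{1}(mxrank_unit ML) (leq_trans (mxrankM_maxl M L) (rank_leq_col M)).
exists e; case: m / e in M L K ML KM *; rewrite castmx_id.
by move: ML; rewrite unitmx_mul => /andP[].
Qed.

Section PairTransversal.

Variables (T : finType) (f : T -> T).
Hypothesis fK : involutive f.

Definition pair_transversal (S : pred T) (X : {set T}) :=
  forall x, S x -> #|X :&: [set x; f x]| = 1%N.

Variables (S : pred T) (X : {set T}).
Hypotheses (XS : {subset X <= S}) (trX : pair_transversal S X).

Lemma pair_transversal_unique y z z' : S y ->
  z \in X :&: [set y; f y] -> z' \in X :&: [set y; f y] -> z = z'.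
Proof. by move=> /trX /eqP/cards1P[w ->]; rewrite !inE => /eqP-> /eqP->. Qed.

Lemma pair_transversal_exists y : S y -> exists z, z \in X :&: [set y; f y].
Proof. by move=> /trX /eqP/cards1P[w ->]; exists w; rewrite set11. Qed.

Lemma pair_transversal_swap x : S x -> f x != x -> (f x \in X) = (x \notin X).
Proof.
move=> Sx fx_x; have := trX Sx.
case Xx: (x \in X); case Xfx: (f x \in X) => //=.
  by rewrite (setIidPr _) ?cards2 1?eq_sym ?fx_x //; apply/subsetP => z;
    rewrite !inE => /orP[] /eqP->.
rewrite (_ : _ :&: _ = set0) ?cards0 //; apply/setP => z; rewrite !inE.
by apply/negP => /andP[zX /orP[] /eqP ez]; rewrite -ez zX in Xx Xfx.
Qed.

Lemma sum_pair_transversal (R : nmodType) (h : T -> R) :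
  (forall x, S x -> S (f x)) -> (forall x, S x -> f x != x) ->
  (forall x, h (f x) = h x) ->
  \sum_(x | S x) h x = (\sum_(x in X) h x) *+ 2.
Proof.
move=> Sf f_neq hf; rewrite (bigID (mem X)) /= mulr2n.
have SXE : [pred x | S x & x \in X] =i mem X.
  by move=> x; rewrite !inE andb_idl //; apply: XS.
congr (_ + _); first exact: eq_bigl SXE.
rewrite (reindex_inj (inv_inj fK)) /=; apply: eq_big => [x|x _]; last exact: hf.
apply/andP/idP => [[Sfx]|Xx].
  have Sx : S x by rewrite -(fK x) Sf.
  by rewrite pair_transversal_swap ?f_neq // negbK.
have Sx := XS Xx; split; first exact: Sf.
by rewrite pair_transversal_swap ?f_neq ?negbK.
Qed.

Variable g : T -> T.
Hypotheses (gK : involutive g) (fgC : forall x, g (f x) = f (g x)).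
Hypothesis Sg : forall x, S x -> S (g x).

Lemma pair_mem_swap x y :
  (y \in [set g x; f (g x)]) = (x \in [set g y; f (g y)]).
Proof.
by rewrite !inE -(inv_eq fK y) -(inv_eq gK (f y)) -(inv_eq gK y) fgC !(eq_sym x).
Qed.

Lemma pair_pattern_unitmx (F : fieldType) (W : 'M[F]_#|X|) :
  (forall a b, (W a b != 0) =
     (enum_val b \in [set g (enum_val a); f (g (enum_val a))])) ->
  W \in unitmx.
Proof.
move=> W_nz; have SX (a : 'I_#|X|) : S (enum_val a) by apply/XS/enum_valP.
apply: monomial_unitmx.
- move=> a; have [z] := pair_transversal_exists (Sg (SX a)).
  rewrite inE => /andP[zX pz]; exists (enum_rank_in zX z).
  by rewrite W_nz enum_rankK_in.
- move=> a b b'; rewrite !W_nz => pb pb'; apply: enum_val_inj.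
  by apply: (pair_transversal_unique (Sg (SX a))); rewrite inE enum_valP.
- move=> a a' b; rewrite !W_nz pair_mem_swap.
  rewrite [_ \in [set g (enum_val a'); _]]pair_mem_swap => pa pa'; apply: enum_val_inj.
  by apply: (pair_transversal_unique (Sg (SX b))); rewrite inE enum_valP.
Qed.

End PairTransversal.

Lemma sumn_pred1l m (a : 'I_m) (F : 'I_m -> nat) :
  (\sum_(k < m) (k == a) * F k = F a)%N.
Proof. by rewrite (bigD1 a) //= eqxx mul1n big1 ?addn0 // => k /negbTE->. Qed.

Lemma sumr_pred1l (R : ringType) m (a : 'I_m) (F : 'I_m -> R) :
  \sum_(k < m) (k == a)%:R * F k = F a.
Proof.
by rewrite (bigD1 a) //= eqxx mul1r big1 ?addr0 // => k /negbTE->; rewrite mul0r.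
Qed.

Lemma chargemx_mulmx m (d : 'I_m -> 'I_m) (M : 'M[algC]_m) i j :
  (chargemx d *m M) i j = M (d i) j.
Proof. by rewrite mxE; under eq_bigr do rewrite mxE; rewrite sumr_pred1l. Qed.

Lemma mulmx_chargemx m (d : 'I_m -> 'I_m) (M : 'M[algC]_m) i j :
  involutive d -> (M *m chargemx d) i j = M i (d j).
Proof.
move=> dK; rewrite mxE -(sumr_pred1l (d j) (M i)).
by apply: eq_bigr => k _; rewrite mxE -(inv_eq dK) eq_sym mulrC.
Qed.

Lemma addr_bool_neq0 (R : numDomainType) (x y : bool) :
  (x%:R + y%:R != 0 :> R) = x || y.
Proof. by rewrite -natrD pnatr_eq0; case: x; case: y. Qed.

Lemma subr_bool_neq0 (R : numDomainType) (x y : bool) : ~~ (x && y) ->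
  (x%:R - y%:R != 0 :> R) = x || y.
Proof.
by case: x; case: y => //= _; rewrite ?subrr ?subr0 ?sub0r ?oppr_eq0 ?oner_eq0 ?eqxx.
Qed.

Section Labels.

Variables (n : nat) (C : preClifford n).
Local Notation bar := (Defs.bar C).
Local Notation mono := (Defs.mono C).
Local Notation dual := (Defs.dual C).
Local Notation one := (Defs.one C).
Local Notation vminus := (Defs.vminus C).
Local Notation s := (smat C).

Lemma barK : involutive bar.
Proof.
move=> i; have := N_assoc C vminus vminus i i.
under eq_bigr => m _ do rewrite iota_fusion.
under [in RHS]eq_bigr => m _ do rewrite !bar_fusion.
by rewrite sumn_pred1l N_unit eqxx sumn_pred1l; case: eqP.
Qed.

Lemma N_barl i j k : N C (bar i) j k = N C i j (bar k).
Proof.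
have := N_assoc C vminus i j k.
under eq_bigr => m _ do rewrite bar_fusion.
under [in RHS]eq_bigr => m _ do rewrite bar_fusion -(inv_eq barK) eq_sym mulnC.
by rewrite !sumn_pred1l.
Qed.

Lemma mono_sign i : (mono i == 1) || (mono i == -1).
Proof. by rewrite -sqrf_eq1 mono_sq. Qed.

Lemma monoV i : (mono i)^-1 = mono i.
Proof. by case/orP: (mono_sign i) => /eqP->; rewrite ?invrN invr1. Qed.

Lemma bar_vminus : bar vminus = one.
Proof. by have := iota_fusion C (bar vminus); rewrite bar_fusion eqxx; case: eqP. Qed.

Lemma bar_one : bar one = vminus.
Proof. by rewrite -bar_vminus barK. Qed.

Lemma mono_one : mono one = 1.
Proof.
have N111 : N C one one one != 0%N by rewrite N_unit eqxx.
by rewrite -(mono_sq C one) expr2 -(mono_fusion N111).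
Qed.

Lemma theta_one : theta C one = 1.
Proof.
have := theta_bar C one; rewrite bar_one mono_one mul1r theta_vminus mulN1r.
by move/esym/eqP; rewrite eqr_opp => /eqP.
Qed.

Lemma mono_vminus : mono vminus = 1.
Proof.
have := theta_bar C vminus.
by rewrite bar_vminus theta_one theta_vminus -mulrA mulrNN !mulr1.
Qed.

Lemma mono_bar i : mono (bar i) = mono i.
Proof.
have Nvi : N C vminus i (bar i) != 0%N by rewrite bar_fusion eqxx.
by rewrite (mono_fusion Nvi) mono_vminus mul1r.
Qed.

Lemma mono_bar_fixed i : bar i = i -> mono i = -1.
Proof.
move=> fix_i; have := theta_bar C i; rewrite fix_i theta_vminus mulrN1 => E.
apply/eqP; rewrite -eqr_opp opprK; apply/eqP/(mulIf (theta_neq0 C i)).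
by rewrite mul1r -E.
Qed.

Lemma NS_bar_neq i : isNS C i -> bar i != i.
Proof.
rewrite /isNS; apply: contraTN => /eqP/mono_bar_fixed->.
by rewrite eqNr oner_eq0.
Qed.

Lemma natr_mono_eq (e : algC) k : (e == 1) || (e == -1) ->
  (mono k == e)%:R = (1 + e * mono k) / 2.
Proof.
move=> e_sign; case/orP: (mono_sign k) => /eqP->; case/orP: e_sign => /eqP->;
  by rewrite ?eqxx ?(eq_sym 1) ?eqNr ?oner_eq0 ?mulr1n ?mulr0n; field.
Qed.

Lemma sum_mono_eq (e : algC) (F : 'I_n -> algC) : (e == 1) || (e == -1) ->
  \sum_(k | mono k == e) F k = (\sum_k F k + e * \sum_k mono k * F k) / 2.
Proof.
move=> e_sign; rewrite big_mkcond mulr_sumr -big_split mulr_suml /=.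
apply: eq_bigr => k _; transitivity ((1 + e * mono k) / 2 * F k); last by ring.
by rewrite -natr_mono_eq //; case: (mono k == e); rewrite ?mulr1n ?mulr0n ?mul1r ?mul0r.
Qed.

Lemma smat_sym i j : s i j = s j i.
Proof. by rewrite /smat -[in LHS](s_sym C) mxE. Qed.

Lemma subSE (X Y : {set 'I_n}) a b : subS C X Y a b = s (enum_val a) (enum_val b).
Proof. exact: mxE. Qed.

Lemma subS_mulE (X Y Z : {set 'I_n}) a b :
  (subS C X Y *m subS C Y Z) a b =
  \sum_(k in Y) s (enum_val a) k * s k (enum_val b).
Proof. by rewrite mxE [RHS]big_enum_val /=; apply: eq_bigr => k _; rewrite !subSE. Qed.

Lemma tr_subS (X Y : {set 'I_n}) : (subS C X Y)^T = subS C Y X.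
Proof. by apply/matrixP => a b; rewrite [LHS]mxE !subSE smat_sym. Qed.

Lemma Rreps_pair_transversal (X : {set 'I_n}) : Rreps C X ->
  pair_transversal bar (fun x => isR C x && (bar x != x)) X.
Proof. by case=> _ trX x /andP[]; apply: trX. Qed.

Hypothesis qdim_vminus : qdim C vminus = 1.

Lemma sum_N_barl i j :
  \sum_k (N C (bar i) j k)%:R * theta C k * qdim C k =
  - (mono i * mono j) * \sum_k (N C i j k)%:R * theta C k * qdim C k.
Proof.
under eq_bigr do rewrite N_barl.
rewrite (reindex_inj (inv_inj barK)) mulr_sumr; apply: eq_bigr => k _.
rewrite barK theta_bar qdim_bar qdim_vminus mul1r theta_vminus.
have [->|/mono_fusion->] := eqVneq (N C i j k) 0%N; last by ring.
by rewrite mulr0n !mul0r mulr0.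
Qed.

Lemma s_barl i j : s (bar i) j = mono j * s i j.
Proof.
have -> : s (bar i) j = mono i ^+ 2 * (mono j * s i j).
  rewrite /smat /smat_of !mxE sum_N_barl theta_bar theta_vminus !invfM monoV invrN1.
  by ring.
by rewrite mono_sq mul1r.
Qed.

Lemma s_barr i j : s i (bar j) = mono i * s i j.
Proof. by rewrite smat_sym s_barl smat_sym. Qed.

Lemma s_isR_fixed i k : mono i = -1 -> bar k = k -> s i k = 0.
Proof.
move=> mono_i fix_k; have := s_barr i k; rewrite fix_k mono_i mulN1r => E.
by apply/eqP; rewrite -eqNr -E.
Qed.

Lemma s2_bar i j k : mono i = mono j -> s i (bar k) * s (bar k) j = s i k * s k j.
Proof.
move=> mono_ij; rewrite s_barr s_barl -mono_ij.
by rewrite mulrACA -expr2 mono_sq mul1r.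
Qed.

Section SSquared.

Variable c : algC.
Hypothesis s_sqE : s *m s = c *: chargemx dual.

Lemma s_sq_entry i j : \sum_k s i k * s k j = c * (j == dual i)%:R.
Proof. by have := congr1 (fun M : 'M_n => M i j) s_sqE; rewrite !mxE. Qed.

Lemma c_neq0 : c != 0.
Proof.
apply/eqP => c0; have s_unit : s \in unitmx := s_unit C.
have s0 : s = 0.
  by rewrite -[s]mul1mx -(mulVmx s_unit) -mulmxA s_sqE c0 scale0r mulmx0.
move: s_unit; rewrite s0 => /mulmxV; rewrite mul0mx => /matrixP/(_ one one).
by rewrite !mxE eqxx => /eqP; rewrite eq_sym oner_eq0.
Qed.

Lemma s_dual i j : s (dual i) j = s i (dual j).
Proof.
have : s *m (s *m s) = (s *m s) *m s by rewrite mulmxA.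
rewrite s_sqE -scalemxAr -scalemxAl => /(scalerI c_neq0)/matrixP/(_ i j).
by rewrite mulmx_chargemx ?chargemx_mulmx //; apply: dual_invol.
Qed.

Lemma mono_dual i : mono (dual i) = mono i.
Proof.
have [j s_ij] : exists j, s (dual i) j != 0.
  case: (pickP (fun j => s (dual i) j != 0)) => [j s_ij|s0]; first by exists j.
  have := s_sq_entry (dual i) (dual (dual i)).
  rewrite eqxx mulr1 big1 => [/esym/eqP|k _]; first by rewrite (negbTE c_neq0).
  by have /negbFE/eqP-> := s0 k; rewrite mul0r.
by apply: (mulIf s_ij); rewrite -s_barr !s_dual dual_bar s_barr.
Qed.

Lemma free_isR_dual x :
  isR C x && (bar x != x) -> isR C (dual x) && (bar (dual x) != dual x).
Proof.
case/andP=> R_x bar_x; apply/andP; split; first by rewrite /isR mono_dual.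
by rewrite -dual_bar (inj_eq (can_inj (dual_invol C))).
Qed.

Lemma sum_mono_s2 i j : \sum_k mono k * (s i k * s k j) = c * (bar j == dual i)%:R.
Proof. by rewrite -s_sq_entry; apply: eq_bigr => k _; rewrite s_barr mulrCA. Qed.

Lemma sum_isNS_s2 i j :
  \sum_(k | isNS C k) s i k * s k j = c / 2 * ((j == dual i)%:R + (bar j == dual i)%:R).
Proof. by rewrite sum_mono_eq ?eqxx // s_sq_entry sum_mono_s2; ring. Qed.

Lemma sum_isR_s2 i j :
  \sum_(k | isR C k) s i k * s k j = c / 2 * ((j == dual i)%:R - (bar j == dual i)%:R).
Proof. by rewrite sum_mono_eq ?eqxx ?orbT // s_sq_entry sum_mono_s2; ring. Qed.

Lemma sum_NSreps_s2 (X : {set 'I_n}) i j : NSreps C X -> mono i = mono j ->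
  \sum_(k in X) s i k * s k j = c / 4 * ((j == dual i)%:R + (bar j == dual i)%:R).
Proof.
move=> [XNS trX] mono_ij; have := sum_isNS_s2 i j.
rewrite (sum_pair_transversal barK XNS trX) => [E|||].
- by apply: (@pmulrnI _ 2 erefl); rewrite E; field.
- by move=> y; rewrite /isNS mono_bar.
- exact: NS_bar_neq.
- by move=> k; rewrite s2_bar.
Qed.

Lemma sum_Rreps_s2 (X : {set 'I_n}) i j : Rreps C X -> mono i = mono j ->
  (\sum_(k in X) s i k * s k j) *+ 2 + \sum_(k in R0set C) s i k * s k j =
  c / 2 * ((j == dual i)%:R - (bar j == dual i)%:R).
Proof.
move=> RX mono_ij; rewrite -sum_isR_s2 [RHS](bigID (fun k => bar k != k)) /=.
congr (_ + _).
  symmetry; apply: (sum_pair_transversal barK RX.1 (Rreps_pair_transversal RX)).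
  - move=> y /andP[R_y bar_y]; apply/andP; split; last by rewrite barK eq_sym.
    by rewrite /isR mono_bar.
  - by move=> y /andP[].
  - by move=> k; rewrite s2_bar.
apply: eq_bigl => k; rewrite inE negbK andb_idl // => /eqP fix_k.
by rewrite /isR mono_bar_fixed.
Qed.

Lemma sum_Rreps_isR_s2 (X : {set 'I_n}) i j : Rreps C X -> isR C i -> isR C j ->
  \sum_(k in X) s i k * s k j = c / 4 * ((j == dual i)%:R - (bar j == dual i)%:R).
Proof.
move=> RX /eqP R_i /eqP R_j; have := sum_Rreps_s2 RX (etrans R_i (esym R_j)).
rewrite [\sum_(k in R0set C) _]big1 => [|k]; last first.
  by rewrite /R0set inE => /eqP fix_k; rewrite s_isR_fixed ?mul0r.
by rewrite addr0 => E; apply: (@pmulrnI _ 2 erefl); rewrite E; field.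
Qed.

Section Representatives.

Variables NSp Rp : {set 'I_n}.
Hypotheses (NSpE : NSreps C NSp) (RpE : Rreps C Rp).

Lemma gram_NSreps_unitmx (S : pred 'I_n) (X : {set 'I_n}) :
  {subset X <= S} -> pair_transversal bar S X -> (forall x, S x -> S (dual x)) ->
  {in X &, forall x y, mono x = mono y} ->
  subS C X NSp *m subS C NSp X \in unitmx.
Proof.
move=> XS trX Sd mono_X.
apply: (pair_pattern_unitmx barK XS trX (dual_invol C) (dual_bar C) Sd) => a b.
rewrite subS_mulE sum_NSreps_s2 //; last exact: mono_X (enum_valP a) (enum_valP b).
rewrite !mulf_eq0 invr_eq0 pnatr_eq0 (negbTE c_neq0) /= addr_bool_neq0.
by rewrite !inE (inv_eq barK).
Qed.

Lemma gram_Rreps_unitmx : subS C Rp Rp *m subS C Rp Rp \in unitmx.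
Proof.
have [RpR _] := RpE.
apply: (pair_pattern_unitmx barK RpR (Rreps_pair_transversal RpE) (dual_invol C)
          (dual_bar C) free_isR_dual) => a b.
have /andP[R_a _] := RpR _ (enum_valP a); have /andP[R_b bar_b] := RpR _ (enum_valP b).
rewrite subS_mulE sum_Rreps_isR_s2 //.
rewrite !mulf_eq0 invr_eq0 pnatr_eq0 (negbTE c_neq0) /= subr_bool_neq0.
  by rewrite !inE (inv_eq barK).
by apply/negP => /andP[/eqP b_a /eqP bb_a]; move: bar_b; rewrite bb_a b_a eqxx.
Qed.

Lemma subS_NSreps_unitmx : subS C NSp NSp \in unitmx.
Proof.
have [NS_NSp trNSp] := NSpE.
have : subS C NSp NSp *m subS C NSp NSp \in unitmx.
  apply: (gram_NSreps_unitmx NS_NSp trNSp).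
    by move=> x; rewrite /isNS mono_dual.
  by move=> x y /NS_NSp/eqP-> /NS_NSp/eqP->.
by rewrite unitmx_mul => /andP[].
Qed.

Lemma subS_Rreps_unitmx : subS C Rp Rp \in unitmx.
Proof. by have := gram_Rreps_unitmx; rewrite unitmx_mul => /andP[]. Qed.

Local Notation B := (subS C NSp Rp).
Local Notation D := (subS C NSp (R0set C)).

Lemma trB_mulD : B^T *m D = 0.
Proof.
have [RpR _] := RpE; apply/matrixP => a b.
have /andP[/eqP R_a bar_a] := RpR _ (enum_valP a).
have /eqP fix_b : bar (enum_val b) == enum_val b.
  by have := enum_valP b; rewrite /R0set inE.
rewrite tr_subS subS_mulE mxE sum_NSreps_s2 //; last by rewrite R_a mono_bar_fixed.
rewrite fix_b; have -> : (enum_val b == dual (enum_val a)) = false.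
  apply/negbTE; apply: contra bar_a => /eqP b_a.
  by rewrite -[enum_val a](dual_invol C) -b_a -dual_bar fix_b.
by rewrite mulr0n addr0 mulr0.
Qed.

Lemma row_gram_unitmx : row_mx B D *m col_mx (2 *: B^T) D^T \in unitmx.
Proof.
have [NS_NSp trNSp] := NSpE.
rewrite mul_row_col -scalemxAr !tr_subS.
apply: (pair_pattern_unitmx barK NS_NSp trNSp (dual_invol C) (dual_bar C)).
  by move=> x; rewrite /isNS mono_dual.
move=> a b; have NS_a := NS_NSp _ (enum_valP a); have NS_b := NS_NSp _ (enum_valP b).
rewrite mxE [X in X + _]mxE !subS_mulE mulr_natl sum_Rreps_s2 //; last first.
  by rewrite (eqP NS_a) (eqP NS_b).
rewrite !mulf_eq0 invr_eq0 pnatr_eq0 (negbTE c_neq0) /= subr_bool_neq0.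
  by rewrite !inE (inv_eq barK).
apply/negP => /andP[/eqP b_a /eqP bb_a]; move: (NS_bar_neq NS_b).
by rewrite bb_a b_a eqxx.
Qed.

Lemma tr_row_gram_unitmx : (row_mx B D)^T *m row_mx B D \in unitmx.
Proof.
have [RpR _] := RpE.
rewrite tr_row_mx mul_col_row trB_mulD unitmxE det_lblock unitfE mulf_eq0 negb_or.
rewrite -!unitfE -!unitmxE !tr_subS; apply/andP; split.
  apply: (gram_NSreps_unitmx RpR (Rreps_pair_transversal RpE) free_isR_dual).
  by move=> x y /RpR/andP[/eqP-> _] /RpR/andP[/eqP-> _].
apply: (gram_NSreps_unitmx (S := fun x => bar x == x)).
- by move=> x; rewrite /R0set inE.
- move=> x /eqP fix_x; rewrite fix_x setUid (setIidPr _) ?cards1 //.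
  by rewrite sub1set /R0set inE fix_x.
- by move=> x /eqP fix_x; rewrite -dual_bar fix_x.
- by move=> x y; rewrite /R0set !inE => /eqP/mono_bar_fixed-> /eqP/mono_bar_fixed->.
Qed.

End Representatives.

End SSquared.

End Labels.

Unset Implicit Arguments.

Theorem mainTheorem6 (n : nat) (C : preClifford n) (NSp Rp : {set 'I_n}) :
  qdim C (vminus C) = 1 ->
  NSreps C NSp -> Rreps C Rp ->
  [/\ forall i, i \in R0set C -> isR C i,
      (subS C NSp NSp)^T = subS C NSp NSp /\ subS C NSp NSp \in unitmx,
      (subS C Rp Rp)^T = subS C Rp Rp /\ subS C Rp Rp \in unitmx,
      exists e : (#|Rp| + #|R0set C| = #|NSp|)%N,
        castmx (erefl #|NSp|, e)
          (row_mx (subS C NSp Rp) (subS C NSp (R0set C))) \in unitmx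
    & (subS C NSp Rp)^T *m subS C NSp (R0set C) = 0].
Proof.
move=> qdim_vminus NSpE RpE.
have [c s_sqE] : exists c, smat C *m smat C = c *: chargemx (dual C) := s_sq C.
split.
- by move=> i; rewrite /R0set inE => /eqP/mono_bar_fixed/eqP.
- by rewrite tr_subS (subS_NSreps_unitmx qdim_vminus s_sqE NSpE).
- by rewrite tr_subS (subS_Rreps_unitmx qdim_vminus s_sqE RpE).
- exact: (castmx_unitmx (row_gram_unitmx qdim_vminus s_sqE NSpE RpE)
                         (tr_row_gram_unitmx qdim_vminus s_sqE NSpE RpE)).
- exact: (trB_mulD qdim_vminus s_sqE NSpE RpE).
Qed.
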